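(* Assume the normalization $\sigma_j=e$, $\eta_j=i\infty$ and $\begin{pmatrix}1&1\\0&1\end{pmatrix}\in\Gamma$, and let $\kappa>0$. Let $p=\Gamma\begin{pmatrix}a&b\\c&d\end{pmatrix}\in\Gamma\backslash\mathrm{PSL}(2,\mathbb R)$ with $c\neq0$. Then $p\notin S_{j,\kappa}$ if and only if $a/c\notin S_\kappa$.
   Context: $G=\mathrm{PSL}(2,\mathbb R)$ acts linearly on $\mathbb R^2/\pm$; $\Gamma<G$ is a non-uniform lattice, one of whose cusps $\eta_j$ is at $i\infty$ with $\sigma_j=e$; $N=\{\begin{pmatrix}1&t\\0&1\end{pmatrix}\}$, $e_1=(1,0)^T$, $\Gamma_j=\Gamma\cap N$, $\pi_j:\Gamma_j\backslash G\to\Gamma\backslash G$ the projection, $m_j(\Gamma_jg)=g^{-1}e_1\in\mathbb R^2/\pm$. $S_{j,\kappa}$ is the set of $p\in\Gamma\backslash G$ for which there exist $\mu,\nu>0$ such that every $(a',b')^T\in m_j(\pi_j^{-1}(p))$ satisfies $|b'|\ge\mu$ or $|a'|^\kappa|b'|\ge\nu$. A real number $x$ is Diophantine of type $\kappa$ with respect to $\Gamma e_1$ if there is $\tilde C>0$ with $|\beta|^\kappa|x\beta-\alpha|\ge\tilde C$ for all $(\alpha,\beta)\in\Gamma e_1$ with $\beta\ne0$; $S_\kappa\subset\mathbb R$ denotes the set of such $x$. *)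

From Stdlib Require Import Reals.
Open Scope R_scope.

(* 2x2 real matrices; SL(2,R) = those of determinant 1, and
   PSL(2,R) = SL(2,R)/{+-I}.  A subgroup of PSL(2,R) is represented by its
   preimage in SL(2,R) (a predicate closed under g |-> -g). *)
Record M2 := mkM2 { m11 : R; m12 : R; m21 : R; m22 : R }.

Definition det (g : M2) : R := m11 g * m22 g - m12 g * m21 g.

Definition mmul (g h : M2) : M2 :=
  mkM2 (m11 g * m11 h + m12 g * m21 h) (m11 g * m12 h + m12 g * m22 h)
       (m21 g * m11 h + m22 g * m21 h) (m21 g * m12 h + m22 g * m22 h).

Definition minv (g : M2) : M2 := mkM2 (m22 g) (- m12 g) (- m21 g) (m11 g).

Definition mneg (g : M2) : M2 := mkM2 (- m11 g) (- m12 g) (- m21 g) (- m22 g).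

Definition I2 : M2 := mkM2 1 0 0 1.

Definition Tmat : M2 := mkM2 1 1 0 1.

Definition mapp (g : M2) (v : R * R) : R * R :=
  (m11 g * fst v + m12 g * snd v, m21 g * fst v + m22 g * snd v).

Definition vneg (v : R * R) : R * R := (- fst v, - snd v).

Definition e1 : R * R := (1, 0).

(* |x|^k for k > 0, with the convention 0^k = 0
   (Stdlib's Rpower is only meaningful for positive bases). *)
Definition abspow (x k : R) : R :=
  if Req_EM_T x 0 then 0 else Rpower (Rabs x) k.

Record DiscretePSL2 (Gam : M2 -> Prop) : Prop := {
  dg_det : forall g, Gam g -> det g = 1;
  dg_id : Gam I2;
  dg_mul : forall g h, Gam g -> Gam h -> Gam (mmul g h);
  dg_inv : forall g, Gam g -> Gam (minv g);
  dg_neg : forall g, Gam g -> Gam (mneg g);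
  dg_discrete : exists eps, 0 < eps /\
    forall g, Gam g ->
      Rabs (m11 g - 1) < eps -> Rabs (m12 g) < eps ->
      Rabs (m21 g) < eps -> Rabs (m22 g - 1) < eps -> g = I2
}.

(* v in m_j(pi_j^{-1}(Gamma g)) (as an element of R^2/+-, i.e. up to sign):
   the fibre pi_j^{-1}(Gamma g) consists of the cosets Gamma_j h with
   Gamma h = Gamma g, i.e. h g^{-1} in Gamma, and m_j(Gamma_j h) = h^{-1} e1. *)
Definition in_mj_fiber (Gam : M2 -> Prop) (g : M2) (v : R * R) : Prop :=
  exists h, det h = 1 /\ Gam (mmul h (minv g)) /\
    (v = mapp (minv h) e1 \/ v = vneg (mapp (minv h) e1)).

Definition S_jk (Gam : M2 -> Prop) (kappa : R) (g : M2) : Prop :=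
  exists mu nu, 0 < mu /\ 0 < nu /\
    forall v, in_mj_fiber Gam g v ->
      Rabs (snd v) >= mu \/ abspow (fst v) kappa * Rabs (snd v) >= nu.

(* x is Diophantine of type kappa w.r.t. Gamma e1, i.e. x in S_kappa *)
Definition S_k (Gam : M2 -> Prop) (kappa : R) (x : R) : Prop :=
  exists C, 0 < C /\
    forall gam, Gam gam ->
      let alpha := fst (mapp gam e1) in
      let beta := snd (mapp gam e1) in
      beta <> 0 -> abspow beta kappa * Rabs (x * beta - alpha) >= C.

From Stdlib Require Import Reals Lra Psatz ZArith.
Open Scope R_scope.

(* For [g = (a b; c d)] the fibre of [Gamma g] consists of the vectors
   [+- (a', b') = +- g^-1 (al, be)] with [(al, be)] a first column of [Gamma],
   and [b' = c (x be - al)] for [x = a / c].  So both conditions concern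
   [|b'|], and they agree as soon as [|a'|] and [|be|] are comparable whenever
   [b'] is small: from [S_kappa] this follows from discreteness (a short
   column conjugates [T] close to the identity, so [a'] cannot be small too),
   towards [S_kappa] from the translations [T^n], which move [b'] by multiples
   of [c be] and thus, under the cusp bound, keep [|be|] away from [0]. *)

Lemma Rdiv_le_l (x y z : R) : 0 < z -> y <= x * z -> y / z <= x.
Proof.
  intros hz h. replace x with (x * z / z) by (field; lra).
  unfold Rdiv. apply Rmult_le_compat_r; [left; apply Rinv_0_lt_compat|]; lra.
Qed.

Lemma abspow_nz (x k : R) : x <> 0 -> abspow x k = Rpower (Rabs x) k.
Proof. intros hx. unfold abspow. destruct (Req_EM_T x 0); [contradiction | reflexivity]. Qed.

Lemma abspow0 (k : R) : abspow 0 k = 0.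
Proof. unfold abspow. destruct (Req_EM_T 0 0); [reflexivity | contradiction]. Qed.

Lemma abspow_gt0 (x k : R) : x <> 0 -> 0 < abspow x k.
Proof. intros hx. rewrite abspow_nz by exact hx. apply exp_pos. Qed.

Lemma abspow_ge0 (x k : R) : 0 <= abspow x k.
Proof.
  destruct (Req_dec x 0) as [-> | hx]; [rewrite abspow0; lra|].
  left; apply abspow_gt0, hx.
Qed.

Lemma abspow_Rabs (x y k : R) : Rabs x = Rabs y -> abspow x k = abspow y k.
Proof.
  intros h.
  destruct (Req_dec x 0) as [-> | hx]; destruct (Req_dec y 0) as [-> | hy];
    try reflexivity.
  - rewrite Rabs_R0 in h. pose proof (Rabs_pos_lt y hy). lra.
  - rewrite Rabs_R0 in h. pose proof (Rabs_pos_lt x hx). lra.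
  - rewrite !abspow_nz, h by assumption. reflexivity.
Qed.

Lemma abspow_mult (x y k : R) : abspow (x * y) k = abspow x k * abspow y k.
Proof.
  destruct (Req_dec x 0) as [-> | hx]; [rewrite Rmult_0_l, abspow0; ring|].
  destruct (Req_dec y 0) as [-> | hy]; [rewrite Rmult_0_r, abspow0; ring|].
  rewrite !abspow_nz by (try apply Rmult_integral_contrapositive_currified; assumption).
  rewrite Rabs_mult, Rpower_mult_distr; auto using Rabs_pos_lt.
Qed.

Lemma abspow_le (x y k : R) : 0 <= k -> Rabs x <= Rabs y -> abspow x k <= abspow y k.
Proof.
  intros hk hxy.
  destruct (Req_dec x 0) as [-> | hx]; [rewrite abspow0; apply abspow_ge0|].
  assert (hy : y <> 0).
  { intros ->. rewrite Rabs_R0 in hxy. pose proof (Rabs_pos_lt x hx). lra. }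
  rewrite !abspow_nz by assumption.
  apply Rle_Rpower_l; [exact hk | split; [apply Rabs_pos_lt|]; assumption].
Qed.

Lemma mmulA (g h k : M2) : mmul g (mmul h k) = mmul (mmul g h) k.
Proof. destruct g, h, k; unfold mmul; simpl; f_equal; ring. Qed.

Lemma minv_mmul (g h : M2) : minv (mmul g h) = mmul (minv h) (minv g).
Proof. destruct g, h; unfold minv, mmul; simpl; f_equal; ring. Qed.

Lemma minvK (g : M2) : minv (minv g) = g.
Proof. destruct g; unfold minv; simpl; f_equal; ring. Qed.

Lemma det_mmul (g h : M2) : det (mmul g h) = det g * det h.
Proof. destruct g, h; unfold det, mmul; simpl; ring. Qed.

Lemma det_minv (g : M2) : det (minv g) = det g.
Proof. destruct g; unfold det, minv; simpl; ring. Qed.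

Lemma mmul1m (g : M2) : mmul I2 g = g.
Proof. destruct g; unfold mmul, I2; simpl; f_equal; ring. Qed.

Lemma mmulm1 (g : M2) : mmul g I2 = g.
Proof. destruct g; unfold mmul, I2; simpl; f_equal; ring. Qed.

Lemma mmul_minv (g : M2) : det g = 1 -> mmul g (minv g) = I2.
Proof. destruct g; unfold det, mmul, minv, I2; simpl; intros h; f_equal; lra. Qed.

Lemma mmul_minv_l (g : M2) : det g = 1 -> mmul (minv g) g = I2.
Proof. destruct g; unfold det, mmul, minv, I2; simpl; intros h; f_equal; lra. Qed.

Lemma mapp_mmul (g h : M2) (v : R * R) : mapp (mmul g h) v = mapp g (mapp h v).
Proof. destruct g, h, v; unfold mapp, mmul; simpl; f_equal; ring. Qed.

Lemma mapp_e1 (g : M2) : mapp g e1 = (m11 g, m21 g).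
Proof. unfold mapp, e1; simpl; f_equal; ring. Qed.

Definition cusp_coord (g gam : M2) : R * R := mapp (minv g) (mapp gam e1).

Definition fiber_bound (mu nu kappa : R) (v : R * R) : Prop :=
  Rabs (snd v) >= mu \/ abspow (fst v) kappa * Rabs (snd v) >= nu.

Lemma in_mj_fiberP (Gam : M2 -> Prop) (g : M2) (v : R * R) :
  DiscretePSL2 Gam -> det g = 1 ->
  in_mj_fiber Gam g v <->
  exists gam, Gam gam /\ (v = cusp_coord g gam \/ v = vneg (cusp_coord g gam)).
Proof.
  intros HG hg. unfold cusp_coord. split.
  - intros [h [_ [hGam hv]]].
    exists (minv (mmul h (minv g))). split; [apply (dg_inv _ HG), hGam|].
    rewrite minv_mmul, minvK, <- mapp_mmul, mmulA, mmul_minv_l, mmul1m by exact hg.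
    exact hv.
  - intros [gam [hGam hv]].
    pose proof (dg_det _ HG gam hGam) as hdet.
    exists (mmul (minv gam) g). split; [|split].
    + rewrite det_mmul, det_minv, hdet, hg. ring.
    + rewrite <- mmulA, mmul_minv, mmulm1 by exact hg. apply (dg_inv _ HG), hGam.
    + rewrite minv_mmul, minvK, mapp_mmul. exact hv.
Qed.

Lemma fiber_bound_vneg (mu nu kappa : R) (v : R * R) :
  fiber_bound mu nu kappa (vneg v) <-> fiber_bound mu nu kappa v.
Proof.
  unfold fiber_bound, vneg; simpl.
  rewrite Rabs_Ropp, (abspow_Rabs (- fst v) (fst v)) by apply Rabs_Ropp.
  reflexivity.
Qed.

Lemma S_jkP (Gam : M2 -> Prop) (kappa : R) (g : M2) :
  DiscretePSL2 Gam -> det g = 1 ->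
  S_jk Gam kappa g <-> exists mu nu, 0 < mu /\ 0 < nu /\
    forall gam, Gam gam -> fiber_bound mu nu kappa (cusp_coord g gam).
Proof.
  intros HG hg. split.
  - intros [mu [nu [hmu [hnu H]]]]. exists mu, nu. do 2 (split; [assumption|]).
    intros gam hGam. apply H, (in_mj_fiberP _ _ _ HG hg). eauto.
  - intros [mu [nu [hmu [hnu H]]]]. exists mu, nu. do 2 (split; [assumption|]).
    intros v hv. apply (in_mj_fiberP _ _ _ HG hg) in hv as [gam [hGam [-> | ->]]].
    + apply H, hGam.
    + apply fiber_bound_vneg, H, hGam.
Qed.

(* Conjugating [Tmat] by a matrix with first column (al, be) gives
   (1 - al be, al^2; - be^2, 1 + al be), which tends to I2 with the column. *)
Lemma first_column_away_from_0 (Gam : M2 -> Prop) :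
  DiscretePSL2 Gam -> Gam Tmat ->
  exists delta, 0 < delta /\
    forall gam, Gam gam -> delta <= Rabs (m11 gam) + Rabs (m21 gam).
Proof.
  intros HG HT. destruct (dg_discrete _ HG) as [eps [heps Hd]].
  exists (Rmin eps 1). split; [apply Rmin_glb_lt; lra|].
  intros gam hGam. apply Rnot_lt_le. intros hsmall.
  pose proof (Rmin_l eps 1). pose proof (Rmin_r eps 1).
  assert (hconj : Gam (mmul gam (mmul Tmat (minv gam)))).
  { apply (dg_mul _ HG); [assumption|]. apply (dg_mul _ HG); [assumption|].
    apply (dg_inv _ HG), hGam. }
  pose proof (dg_det _ HG gam hGam) as hdet.
  destruct gam as [al p be q]; unfold det in hdet; simpl in *.
  pose proof (Rabs_pos al). pose proof (Rabs_pos be).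
  assert (hab : Rabs (al * be) < eps) by (rewrite Rabs_mult; nra).
  assert (haa : Rabs (al * al) < eps) by (rewrite Rabs_mult; nra).
  assert (hbb : Rabs (be * be) < eps) by (rewrite Rabs_mult; nra).
  replace (mmul _ _) with (mkM2 (1 - al * be) (al * al) (- (be * be)) (1 + al * be))
    in hconj by (unfold mmul, Tmat, minv; simpl; f_equal; lra).
  assert (hI : mkM2 (1 - al * be) (al * al) (- (be * be)) (1 + al * be) = I2).
  { apply Hd; simpl; [assumption | ..].
    - replace (_ - 1) with (- (al * be)) by ring. rewrite Rabs_Ropp. assumption.
    - assumption.
    - rewrite Rabs_Ropp. assumption.
    - replace (_ - 1) with (al * be) by ring. assumption. }
  injection hI as _ h2 h3 _. assert (al = 0) by nra. assert (be = 0) by nra. subst. lra.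
Qed.

Definition translation (r : R) : M2 := mkM2 1 r 0 1.

Lemma translation_Z (Gam : M2 -> Prop) :
  DiscretePSL2 Gam -> Gam Tmat -> forall z : Z, Gam (translation (IZR z)).
Proof.
  intros HG HT.
  assert (hnat : forall n : nat, Gam (translation (INR n))).
  { induction n as [|n IH]; [exact (dg_id _ HG)|].
    replace (translation (INR (S n))) with (mmul Tmat (translation (INR n)))
      by (rewrite S_INR; unfold mmul, Tmat, translation; simpl; f_equal; ring).
    apply (dg_mul _ HG); assumption. }
  intros [|p|p].
  - exact (hnat 0%nat).
  - rewrite <- positive_nat_Z, <- INR_IZR_INZ. apply hnat.
  - replace (translation (IZR (Z.neg p))) with (minv (translation (IZR (Z.pos p))))
      by (unfold minv, translation; simpl; f_equal; ring).
    apply (dg_inv _ HG). rewrite <- positive_nat_Z, <- INR_IZR_INZ. apply hnat.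
Qed.

Lemma cusp_coord_translation (g gam : M2) (r : R) :
  cusp_coord g (mmul (translation r) gam) =
  (fst (cusp_coord g gam) + r * m21 gam * m22 g,
   snd (cusp_coord g gam) - r * m21 gam * m21 g).
Proof.
  destruct g, gam; unfold cusp_coord, mapp, mmul, minv, translation, e1; simpl.
  f_equal; ring.
Qed.

Section CuspCoordinates.

Variables (Gam : M2 -> Prop) (kappa a b c d : R).
Hypothesis HG : DiscretePSL2 Gam.
Hypothesis hk : 0 < kappa.
Hypothesis hdet : a * d - b * c = 1.
Hypothesis hc : c <> 0.

Lemma column_of_cusp_coord (gam : M2) (a' b' : R) :
  cusp_coord (mkM2 a b c d) gam = (a', b') ->
  m11 gam = a * a' + b * b' /\ m21 gam = c * a' + d * b' /\
  b' = c * (a / c * m21 gam - m11 gam).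
Proof.
  destruct gam as [al p be q]; unfold cusp_coord, mapp, minv, e1; simpl.
  intros hv; injection hv as <- <-.
  assert (F1 : al * (a * d - b * c) = al) by (rewrite hdet; ring).
  assert (F2 : be * (a * d - b * c) = be) by (rewrite hdet; ring).
  split; [lra | split; [lra | field; exact hc]].
Qed.

Lemma cusp_coord_fst_le (gam : M2) (a' b' : R) :
  cusp_coord (mkM2 a b c d) gam = (a', b') ->
  Rabs c * Rabs a' <= Rabs (m21 gam) + Rabs d * Rabs b'.
Proof.
  intros hv. destruct (column_of_cusp_coord gam a' b' hv) as [_ [hbe _]].
  rewrite <- !Rabs_mult. replace (c * a') with (m21 gam + - (d * b')) by lra.
  rewrite <- (Rabs_Ropp (d * b')). apply Rabs_triang.
Qed.

Lemma S_k_S_jk : Gam Tmat -> S_k Gam kappa (a / c) -> S_jk Gam kappa (mkM2 a b c d).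
Proof.
  intros HT [C [hC HC]].
  destruct (first_column_away_from_0 _ HG HT) as [delta [hdelta Hd]].
  pose proof (Rabs_pos a). pose proof (Rabs_pos b). pose proof (Rabs_pos d).
  pose proof (Rabs_pos_lt c hc) as hc0.
  set (M := Rabs a + Rabs b + Rabs c + Rabs d).
  set (mu := Rmin (delta / (2 * M)) (Rabs c * delta)).
  set (P := abspow (Rabs c + Rabs d) kappa).
  assert (hM : delta / (2 * M) * (2 * M) = delta) by (field; unfold M; lra).
  assert (hmu : 0 < mu) by (apply Rmin_glb_lt; [apply Rdiv_lt_0_compat|]; unfold M; nra).
  assert (hmu1 : mu <= delta / (2 * M)) by apply Rmin_l.
  assert (hmu2 : mu <= Rabs c * delta) by apply Rmin_r.
  assert (hP : 0 < P) by (apply abspow_gt0; pose proof (Rabs_pos d); lra).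
  apply S_jkP; [exact HG | unfold det; simpl; lra |].
  exists mu, (Rabs c * C / P). split; [exact hmu | split; [apply Rdiv_lt_0_compat; nra |]].
  intros gam hGam. unfold fiber_bound.
  destruct (cusp_coord (mkM2 a b c d) gam) as [a' b'] eqn:hv; simpl.
  destruct (Rle_lt_dec mu (Rabs b')) as [hbig | hsmall]; [left; lra | right].
  pose proof (cusp_coord_fst_le gam a' b' hv).
  destruct (column_of_cusp_coord gam a' b' hv) as [hal [hbe hx]].
  pose proof (Hd gam hGam) as hcol.
  destruct (Req_dec (m21 gam) 0) as [hbe0 | hbe0].
  - exfalso.
    assert (hb' : b' = - (c * m11 gam)) by (rewrite hx, hbe0; field; exact hc).
    rewrite hbe0, Rabs_R0, Rplus_0_r in hcol.
    rewrite hb', Rabs_Ropp, Rabs_mult in hsmall. nra.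
  - pose proof (HC gam hGam) as HC'. rewrite mapp_e1 in HC'. simpl in HC'.
    specialize (HC' hbe0). apply Rge_le in HC'.
    assert (hbnd : Rabs (m11 gam) + Rabs (m21 gam) <= M * (Rabs a' + Rabs b')).
    { rewrite hal, hbe. pose proof (Rabs_triang (a * a') (b * b')).
      pose proof (Rabs_triang (c * a') (d * b')). rewrite !Rabs_mult in *.
      pose proof (Rabs_pos a'). pose proof (Rabs_pos b'). unfold M. nra. }
    assert (ha' : Rabs b' <= Rabs a') by (unfold M in *; nra).
    assert (hpow : abspow (m21 gam) kappa <= P * abspow a' kappa).
    { unfold P. rewrite <- abspow_mult. apply abspow_le; [lra|].
      rewrite Rabs_mult, (Rabs_right (Rabs c + Rabs d)), hbe by lra.
      pose proof (Rabs_triang (c * a') (d * b')). rewrite !Rabs_mult in *. nra. }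
    apply Rle_ge, Rdiv_le_l; [exact hP|].
    pose proof (abspow_ge0 a' kappa). pose proof (Rabs_pos b').
    rewrite hx, Rabs_mult in *. nra.
Qed.

Section FromCuspBound.

Hypothesis HT : Gam Tmat.
Variables mu nu : R.
Hypotheses (hmu : 0 < mu) (hnu : 0 < nu).
Hypothesis Hfib :
  forall gam, Gam gam -> fiber_bound mu nu kappa (cusp_coord (mkM2 a b c d) gam).

(* On the strip [|beta| <= 1] the first coordinate is bounded once the second
   is below [mu], so the Diophantine branch of [fiber_bound] bounds it below. *)
Lemma cusp_coord_snd_lb_strip :
  exists lam, 0 < lam /\ forall gam, Gam gam -> Rabs (m21 gam) <= 1 ->
    lam <= Rabs (snd (cusp_coord (mkM2 a b c d) gam)).
Proof.
  pose proof (Rabs_pos d). pose proof (Rabs_pos_lt c hc) as hc0.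
  set (A := (1 + Rabs d * mu) / Rabs c).
  assert (hA : Rabs c * A = 1 + Rabs d * mu) by (unfold A; field; lra).
  assert (hA0 : 0 < A) by (unfold A; apply Rdiv_lt_0_compat; nra).
  assert (hPA : 0 < abspow A kappa) by (apply abspow_gt0; lra).
  exists (Rmin mu (nu / abspow A kappa)).
  split; [apply Rmin_glb_lt; [|apply Rdiv_lt_0_compat]; assumption|].
  intros gam hGam hbe1.
  destruct (cusp_coord (mkM2 a b c d) gam) as [a' b'] eqn:hv; simpl.
  destruct (Rle_lt_dec mu (Rabs b')) as [hbig | hsmall];
    [pose proof (Rmin_l mu (nu / abspow A kappa)); lra|].
  destruct (Hfib gam hGam) as [h | h]; rewrite hv in h; simpl in h; [lra|].
  pose proof (cusp_coord_fst_le gam a' b' hv). pose proof (Rabs_pos b').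
  assert (hpow : abspow a' kappa <= abspow A kappa).
  { apply abspow_le; [lra|]. rewrite (Rabs_right A) by lra. nra. }
  eapply Rle_trans; [apply Rmin_r|]. apply Rdiv_le_l; [exact hPA|].
  pose proof (abspow_ge0 a' kappa). nra.
Qed.

(* Translating by [T^n] shifts the second coordinate by [- n c beta]; choosing
   [n] well makes it at most [|c beta|], so the strip bound forces [beta] large. *)
Lemma m21_away_from_0 :
  exists beta0, 0 < beta0 /\ forall gam, Gam gam -> m21 gam <> 0 ->
    beta0 <= Rabs (m21 gam).
Proof.
  destruct cusp_coord_snd_lb_strip as [lam [hlam Hlam]].
  pose proof (Rabs_pos_lt c hc) as hc0.
  exists (Rmin 1 (lam / Rabs c)).
  split; [apply Rmin_glb_lt; [lra | apply Rdiv_lt_0_compat; assumption]|].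
  intros gam hGam hbe0.
  destruct (Rle_lt_dec (Rabs (m21 gam)) 1) as [hbe1 | hbe1];
    [|pose proof (Rmin_l 1 (lam / Rabs c)); lra].
  eapply Rle_trans; [apply Rmin_r|]. apply Rdiv_le_l; [exact hc0|].
  set (b' := snd (cusp_coord (mkM2 a b c d) gam)).
  set (r := b' / (c * m21 gam)).
  destruct (base_Int_part r) as [hn1 hn2].
  assert (hGam' : Gam (mmul (translation (IZR (Int_part r))) gam))
    by (apply (dg_mul _ HG); [apply translation_Z|]; assumption).
  assert (hm21 : m21 (mmul (translation (IZR (Int_part r))) gam) = m21 gam) by (simpl; ring).
  assert (hshift : snd (cusp_coord (mkM2 a b c d) (mmul (translation (IZR (Int_part r))) gam))
                   = c * m21 gam * (r - IZR (Int_part r))).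
  { rewrite cusp_coord_translation. unfold r, b'. simpl. field. split; assumption. }
  pose proof (Hlam _ hGam') as hl. rewrite hm21, hshift in hl. specialize (hl hbe1).
  rewrite !Rabs_mult, (Rabs_right (r - _)) in hl by lra.
  pose proof (Rabs_pos (m21 gam)). nra.
Qed.

Lemma S_k_of_fiber_bound : S_k Gam kappa (a / c).
Proof.
  destruct m21_away_from_0 as [beta0 [hb0 Hb0]].
  pose proof (Rabs_pos d). pose proof (Rabs_pos_lt c hc) as hc0.
  set (L := (1 + Rabs d * mu / beta0) / Rabs c).
  assert (hL : Rabs c * L * beta0 = beta0 + Rabs d * mu) by (unfold L; field; lra).
  assert (hL0 : 0 < L).
  { unfold L. apply Rdiv_lt_0_compat; [|exact hc0].
    assert (0 <= Rabs d * mu / beta0)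
      by (apply Rmult_le_pos; [nra | left; apply Rinv_0_lt_compat, hb0]).
    lra. }
  set (K := Rmin (abspow beta0 kappa * mu) (nu / abspow L kappa)).
  assert (hQ : 0 < abspow beta0 kappa) by (apply abspow_gt0; lra).
  assert (hPL : 0 < abspow L kappa) by (apply abspow_gt0; lra).
  exists (K / Rabs c).
  split;
    [apply Rdiv_lt_0_compat; [apply Rmin_glb_lt; [nra | apply Rdiv_lt_0_compat] |]; assumption|].
  intros gam hGam. rewrite mapp_e1. cbv zeta. simpl. intros hbe0.
  apply Rle_ge, Rdiv_le_l; [exact hc0|].
  pose proof (Hb0 gam hGam hbe0) as hbeta.
  pose proof (Hfib gam hGam) as hfib.
  destruct (cusp_coord (mkM2 a b c d) gam) as [a' b'] eqn:hv.
  unfold fiber_bound in hfib; simpl in hfib.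
  destruct (column_of_cusp_coord gam a' b' hv) as [_ [_ hx]].
  assert (hb' : Rabs b' = Rabs c * Rabs (a / c * m21 gam - m11 gam))
    by (rewrite hx, Rabs_mult; reflexivity).
  replace (abspow (m21 gam) kappa * Rabs (a / c * m21 gam - m11 gam) * Rabs c)
    with (abspow (m21 gam) kappa * Rabs b') by (rewrite hb'; ring).
  pose proof (Rabs_pos b'). pose proof (abspow_ge0 (m21 gam) kappa).
  destruct (Rle_lt_dec mu (Rabs b')) as [hbig | hsmall].
  - assert (abspow beta0 kappa <= abspow (m21 gam) kappa)
      by (apply abspow_le; [lra | rewrite Rabs_right by lra; exact hbeta]).
    eapply Rle_trans; [apply Rmin_l|]. nra.
  - destruct hfib as [h | h]; [lra|]. apply Rge_le in h.
    pose proof (cusp_coord_fst_le gam a' b' hv).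
    assert (ha' : Rabs c * Rabs a' * beta0 <= Rabs c * (L * Rabs (m21 gam)) * beta0).
    { replace (Rabs c * (L * Rabs (m21 gam)) * beta0)
        with (Rabs (m21 gam) * (Rabs c * L * beta0)) by ring.
      rewrite hL.
      assert (Rabs c * Rabs a' * beta0 <= (Rabs (m21 gam) + Rabs d * mu) * beta0)
        by (apply Rmult_le_compat_r; nra).
      assert (Rabs d * mu * beta0 <= Rabs d * mu * Rabs (m21 gam))
        by (apply Rmult_le_compat_l; nra).
      nra. }
    assert (hpow : abspow a' kappa <= abspow L kappa * abspow (m21 gam) kappa).
    { rewrite <- abspow_mult. apply abspow_le; [lra|].
      rewrite Rabs_mult, (Rabs_right L) by lra.
      apply (Rmult_le_reg_r (Rabs c * beta0)); nra. }
    eapply Rle_trans; [apply Rmin_r|]. apply Rdiv_le_l; [exact hPL|].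
    pose proof (abspow_ge0 a' kappa). nra.
Qed.

End FromCuspBound.

End CuspCoordinates.

Theorem lemmaA6 (Gam : M2 -> Prop) (HG : DiscretePSL2 Gam) (HT : Gam Tmat)
  (kappa : R) (hk : 0 < kappa) (a b c d : R) (hdet : a * d - b * c = 1)
  (hc : c <> 0) :
  ~ S_jk Gam kappa (mkM2 a b c d) <-> ~ S_k Gam kappa (a / c).
Proof.
  split; intros hnot hS; apply hnot.
  - exact (S_k_S_jk Gam kappa a b c d HG hk hdet hc HT hS).
  - apply (S_jkP _ _ _ HG) in hS as [mu [nu [hmu [hnu Hfib]]]];
      [|unfold det; simpl; lra].
    exact (S_k_of_fiber_bound Gam kappa a b c d HG hk hdet hc HT mu nu hmu hnu Hfib).
Qed.
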